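(* For every fixed integer $m\ge 1$, \[\lim_{n\to\infty}\frac{sat(Q_n,Q_m)}{e(Q_n)}=0.\]
   Context: $Q_n$ is the $n$-dimensional hypercube: vertex set $\{0,1\}^n$, two vertices adjacent iff they differ in exactly one coordinate; $e(Q_n)=n2^{n-1}$ is its number of edges. A copy of a graph $F$ in a graph $G$ is a subgraph of $G$ isomorphic to $F$; $G$ is $F$-free if it contains no copy of $F$. A graph $G$ is $(Q_n,F)$-saturated if $G$ is a subgraph of $Q_n$ (on vertex set $\{0,1\}^n$), $G$ is $F$-free, and adding to $G$ any edge of $E(Q_n)\setminus E(G)$ creates a copy of $F$ (i.e. $G$ is a maximal $F$-free subgraph of $Q_n$). $sat(Q_n,F)$ is the minimum number of edges of a $(Q_n,F)$-saturated graph. *)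

From mathcomp Require Import all_boot.
Set Implicit Arguments. Unset Strict Implicit. Unset Printing Implicit Defensive.

Definition cube (n : nat) : finType := {ffun 'I_n -> bool}.

Definition cadj (n : nat) (u v : cube n) : bool :=
  #|[set i : 'I_n | u i != v i]| == 1.

Definition cube_edges (n : nat) : {set {set cube n}} :=
  [set e : {set cube n} | [exists u : cube n, exists v : cube n,
     cadj u v && (e == [set u; v])]].

Definition eQ (n : nat) : nat := n * 2 ^ n.-1.

Definition has_copy (m n : nat) (G : {set {set cube n}}) : bool :=
  [exists phi : {ffun cube m -> cube n},
     injectiveb phi &&
     [forall x : cube m, forall y : cube m,
        cadj x y ==> ([set phi x; phi y] \in G)]].

Definition saturated (m n : nat) (G : {set {set cube n}}) : bool :=
  [&& G \subset cube_edges n,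
      ~~ has_copy m G &
      [forall e in cube_edges n :\: G, has_copy m (e |: G)]].

(* Every saturated G has #|G| <= e(Q_n) edges, and saturated graphs exist
   (maximal Q_m-free subgraphs), so the default value is never the answer
   unless it is the true minimum. *)
Definition sat (n m : nat) : nat :=
  \big[minn/eQ n]_(G : {set {set cube n}} | saturated m G) #|G|.

(* It suffices to build a [Q_(M+1)]-free subgraph [T] of [Q_n] that is almost
   saturated.  Group the first [s = 2 M 2^r] coordinates into [2 M] blocks of length [2^r]
   and call a vertex good when the Hamming syndromes of all its blocks are nonzero.  [T] is
   designed so that adding the edge [{v, v + e_d}] for a good [v] and a direction [d >= s]
   completes a copy of [Q_(M+1)].  A maximal [Q_(M+1)]-free supergraph of [T] is then
   saturated, and each of its edges lies in one of the first [s] directions or at one of the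
   at most [2 M 2^(n-r)] bad vertices, so
   [sat(Q_n, Q_(M+1)) <= 2^n s + 2 M 2^(n-r) n = o(n 2^(n-1))]
   when first [n] and then [r] tend to infinity. *)

From Stdlib Require Import Reals Lra PeanoNat.
From HB Require Import structures.
From mathcomp Require Import all_boot zify.
Set Implicit Arguments. Unset Strict Implicit. Unset Printing Implicit Defensive.

Section Cube.
Variable n : nat.
Implicit Types (u v w : cube n) (c d : 'I_n).

Definition cube0 : cube n := [ffun=> false].

Definition flip v d : cube n := [ffun c => if c == d then ~~ v c else v c].

Lemma flipE v d c : flip v d c = if c == d then ~~ v c else v c.
Proof. by rewrite ffunE. Qed.

Lemma flipK d : involutive (flip^~ d).
Proof. by move=> v; apply/ffunP => c; rewrite !flipE; case: eqP => // _; rewrite negbK. Qed.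

Lemma flipC v c d : flip (flip v c) d = flip (flip v d) c.
Proof. by apply/ffunP => i; rewrite !flipE; case: (i == c); case: (i == d). Qed.

Lemma flip_neq v d : flip v d != v.
Proof. by apply/eqP => /ffunP /(_ d); rewrite flipE eqxx; case: (v d). Qed.

Lemma flip_inj v : injective (flip v).
Proof.
by move=> c d /ffunP /(_ c); rewrite !flipE eqxx; case: eqP => // _; case: (v c).
Qed.

Lemma cadj_flip v d : cadj v (flip v d).
Proof.
rewrite /cadj (_ : [set c | v c != flip v d c] = [set d]) ?cards1 //.
by apply/setP => c; rewrite !inE flipE; case: (c == d); case: (v c).
Qed.

Lemma cadjP u w : cadj u w -> exists d, w = flip u d.
Proof.
move=> /cards1P [d Ed]; exists d; apply/ffunP => c; rewrite flipE.
have /setP /(_ c) := Ed; rewrite !inE.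
by case: (c == d); case: (u c); case: (w c).
Qed.

Lemma cadj_sym u w : cadj u w -> cadj w u.
Proof. by move=> /cadjP [d ->]; rewrite -{2}(flipK d u) cadj_flip. Qed.

Lemma cadj_neq u w : cadj u w -> u != w.
Proof. by move=> /cadjP [d ->]; rewrite eq_sym flip_neq. Qed.

Lemma cube_edges_cadj u w : [set u; w] \in cube_edges n -> u != w -> cadj u w.
Proof.
rewrite inE => /existsP [u' /existsP [w' /andP [adj /eqP E]]].
have: u \in [set u'; w'] /\ w \in [set u'; w'] by rewrite -E !set21 set22.
rewrite !inE => -[/orP [] /eqP -> /orP [] /eqP ->]; rewrite ?eqxx // => _.
exact: cadj_sym.
Qed.

Lemma cadj_square a b p q : p != q -> b != a ->
  cadj (flip a p) b -> cadj (flip a q) b -> b = flip (flip a p) q.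
Proof.
move=> pq ba /cadjP [u Eu] /cadjP [w Ew].
have up : u != p by apply: contraNneq ba => up; rewrite Eu up flipK.
have /ffunP /(_ p) := etrans (esym Eu) Ew.
rewrite !flipE eqxx (negbTE pq) [p == u]eq_sym (negbTE up) /=.
case: eqP => [wp _ | _]; last by case: (a p).
have /ffunP /(_ u) := etrans (esym Eu) Ew.
rewrite -wp !flipE eqxx (negbTE up) /=.
by case: eqP => [uq _ | _]; [rewrite Eu uq | case: (a u)].
Qed.

Lemma card_cube : #|cube n| = 2 ^ n.
Proof. by rewrite card_ffun card_bool card_ord. Qed.

Lemma cube_ind (P : cube n -> Prop) :
  P cube0 -> (forall v d, ~~ v d -> P v -> P (flip v d)) -> forall v, P v.
Proof.
move=> P0 PS v; have [N] := ubnP #|[set c | v c]|; elim: N v => // N IH v.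
case: (pickP (fun c => v c)) => [d vd | v0] vN; last first.
  by rewrite (_ : v = cube0) //; apply/ffunP => c; rewrite ffunE v0.
rewrite -(flipK d v); apply: PS; first by rewrite flipE eqxx vd.
apply: IH; rewrite -ltnS (leq_trans _ vN) // ltnS; apply: proper_card; apply/properP.
split; last by exists d; rewrite !inE ?flipE ?eqxx ?vd.
by apply/subsetP => c; rewrite !inE flipE; case: eqP => [->|].
Qed.

End Cube.

Section Subcube.
Variables (m n : nat) (v : cube n) (dir : 'I_m -> 'I_n).
Hypothesis dirI : injective dir.

Definition subcube (x : cube m) : cube n :=
  [ffun c => v c (+) [exists i, x i && (dir i == c)]].

Lemma subcube0 : subcube (cube0 m) = v.
Proof.
apply/ffunP => c; rewrite ffunE; case: existsP => [[i]|]; last by rewrite addbF.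
by rewrite ffunE.
Qed.

Lemma subcube_dir x j : [exists i, x i && (dir i == dir j)] = x j.
Proof.
by apply/existsP/idP => [[i /andP [xi /eqP /dirI <-]] // | xj]; exists j; rewrite xj eqxx.
Qed.

Lemma subcube_flip x j : subcube (flip x j) = flip (subcube x) (dir j).
Proof.
apply/ffunP => c; rewrite flipE !ffunE; case: eqP => [-> | cj].
  by rewrite !subcube_dir flipE eqxx; case: (v _); case: (x j).
congr (_ (+) _); apply: eq_existsb => i; rewrite flipE.
case: eqP => [-> | //]; move/eqP/negbTE: cj; rewrite eq_sym => ->; by rewrite !andbF.
Qed.

Lemma subcube_inj : injective subcube.
Proof.
move=> x y /ffunP Exy; apply/ffunP => i; have := Exy (dir i).
by rewrite !ffunE !subcube_dir; case: (v _); case: (x i); case: (y i).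
Qed.

End Subcube.

(* By [cadj_square], the direction of the image of an edge is constant along the
   4-cycles of [Q_m], hence depends only on the coordinate flipped. *)
Lemma cube_hom_subcube m n (phi : cube m -> cube n) :
  injective phi -> {homo phi : x y / cadj x y} ->
  exists2 d, injective d & phi =1 subcube (phi (cube0 m)) d.
Proof.
move=> phiI phiA.
have /fin_all_exists [d phi0] : forall i, exists d, phi (flip (cube0 m) i) = flip (phi (cube0 m)) d.
  by move=> i; apply/cadjP/phiA/cadj_flip.
have dI : injective d.
  by move=> i j dij; apply: (@flip_inj _ (cube0 m)); apply: phiI; rewrite !phi0 dij.
have phi_flip (x : cube m) i : ~~ x i -> phi (flip x i) = flip (phi x) (d i).
  elim/cube_ind: x i => [i _ | y j yj IH i]; first exact: phi0.
  rewrite flipE; case: eqP => [-> | /eqP ij]; first by rewrite yj.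
  move=> yi; rewrite IH //; apply: cadj_square.
  - by apply/eqP => /dI /eqP; rewrite eq_sym (negbTE ij).
  - apply: contra_neq ij => /phiI /ffunP /(_ i).
    by rewrite !flipE eqxx; case: eqP => [-> // | _]; case: (y i).
  - by rewrite -IH //; apply/phiA/cadj_flip.
  - by rewrite -IH // flipC; apply/phiA/cadj_flip.
exists d => // x; elim/cube_ind: x => [|x i xi IH]; first by rewrite subcube0.
by rewrite phi_flip // IH subcube_flip.
Qed.

HB.instance Definition _ := Monoid.isComLaw.Build nat 0 Nat.lxor
  (fun a b c => esym (Nat.lxor_assoc a b c)) Nat.lxor_comm Nat.lxor_0_l.

Lemma expn2E r : 2 ^ r = Nat.pow 2 r.
Proof. by elim: r => // r IH; rewrite expnS IH mulnE. Qed.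

Lemma lxor_lt r a b : a < 2 ^ r -> b < 2 ^ r -> Nat.lxor a b < 2 ^ r.
Proof.
rewrite expn2E => /ltP a_lt /ltP b_lt; apply/ltP.
have pow_neq0 : Nat.pow 2 r <> 0 by apply: Nat.pow_nonzero.
apply/(Nat.div_small_iff _ _ pow_neq0).
rewrite -Nat.shiftr_div_pow2 Nat.shiftr_lxor !Nat.shiftr_div_pow2.
by rewrite (Nat.div_small a) // (Nat.div_small b).
Qed.

Lemma lxor_eq0 a b : (Nat.lxor a b == 0) = (a == b).
Proof. by apply/eqP/eqP => [/Nat.lxor_eq // | ->]; exact: Nat.lxor_nilpotent. Qed.

Lemma lxorKr b a : Nat.lxor (Nat.lxor a b) b = a.
Proof. by rewrite Nat.lxor_assoc Nat.lxor_nilpotent Nat.lxor_0_r. Qed.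

Lemma block_divmod r b t : t < 2 ^ r ->
  ((b * 2 ^ r + t) %/ 2 ^ r = b) * ((b * 2 ^ r + t) %% 2 ^ r = t).
Proof.
move=> t_lt; have r_gt0 : 0 < 2 ^ r by rewrite expn_gt0.
by rewrite divnMDl // divn_small // addn0 modnMDl modn_small.
Qed.

Section Syndrome.
Variables (n r : nat).
Implicit Types (v : cube n) (d : 'I_n).

(* Coordinates are grouped in blocks of length [2 ^ r]; the syndrome of block [b] is the
   XOR of the offsets of the ones of [v] inside it, as in the Hamming code of length [2 ^ r]. *)
Definition syndrome v (b : nat) : nat :=
  \big[Nat.lxor/0]_(c : 'I_n | v c && (c %/ 2 ^ r == b)) (c %% 2 ^ r).

Lemma syndrome_lt v b : syndrome v b < 2 ^ r.
Proof.
apply: (big_ind (fun a => a < 2 ^ r)); [by rewrite expn_gt0 | exact: lxor_lt |].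
by move=> c _; rewrite ltn_mod expn_gt0.
Qed.

Lemma syndrome_flip v d b :
  syndrome (flip v d) b =
  if d %/ 2 ^ r == b then Nat.lxor (syndrome v b) (d %% 2 ^ r) else syndrome v b.
Proof.
rewrite /syndrome !(big_mkcond (fun c => _ && _)) /=.
rewrite (bigD1 d) // [in RHS](bigD1 d) //= flipE eqxx.
rewrite (eq_bigr (fun c => if v c && (c %/ 2 ^ r == b) then c %% 2 ^ r else 0)); last first.
  by move=> c /negbTE cd; rewrite flipE cd.
case: eqP => _; rewrite ?andbT ?andbF //.
case: (v d); rewrite Nat.lxor_0_l; last exact: Nat.lxor_comm.
by rewrite [Nat.lxor (_ %% _) _]Nat.lxor_comm lxorKr.
Qed.

Lemma syndrome_flip_other v d b : d %/ 2 ^ r != b -> syndrome (flip v d) b = syndrome v b.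
Proof. by rewrite syndrome_flip => /negbTE ->. Qed.

Lemma syndrome_subcube m v (dir : 'I_m -> 'I_n) (x : cube m) b : injective dir ->
  syndrome (subcube v dir x) b =
  Nat.lxor (syndrome v b) (\big[Nat.lxor/0]_(i | x i && (dir i %/ 2 ^ r == b)) (dir i %% 2 ^ r)).
Proof.
move=> dirI; elim/cube_ind: x => [|x j xj IH].
  by rewrite subcube0 big_pred0 ?Nat.lxor_0_r // => i; rewrite ffunE.
rewrite subcube_flip // syndrome_flip IH; case: eqP => [jb | /eqP jb].
  rewrite [in RHS](bigD1 j) /=; last by rewrite flipE eqxx xj jb eqxx.
  rewrite Nat.lxor_assoc [Nat.lxor _ (dir j %% _)]Nat.lxor_comm.
  congr (Nat.lxor _ (Nat.lxor _ _)).
  apply: eq_bigl => i; rewrite flipE.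
  by case: (i =P j) => [-> | _]; rewrite ?eqxx ?(negbTE xj) ?andbF ?andbT.
congr (Nat.lxor _ _); apply: eq_bigl => i; rewrite flipE.
by case: (i =P j) => [-> | //]; rewrite (negbTE jb) !andbF.
Qed.

(* The [2 ^ r] flips inside block [b] move the syndrome-zero vectors to pairwise distinct
   vectors. *)
Lemma card_syndrome0 b : b.+1 * 2 ^ r <= n ->
  #|[set v | syndrome v b == 0]| * 2 ^ r <= 2 ^ n.
Proof.
move=> b_lt.
have off_lt (t : 'I_(2 ^ r)) : b * 2 ^ r + t < n.
  by apply: leq_trans b_lt; rewrite mulSn addnC ltn_add2r.
pose f (vt : cube n * 'I_(2 ^ r)) := flip vt.1 (Ordinal (off_lt vt.2)).
have syn_f v t : syndrome (f (v, t)) b = Nat.lxor (syndrome v b) t.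
  by rewrite syndrome_flip /= !(block_divmod b (ltn_ord t)) eqxx.
have fI : {in setX [set v | syndrome v b == 0] [set: 'I_(2 ^ r)] &, injective f}.
  move=> [v t] [v' t']; rewrite !inE /= !andbT => /eqP v0 /eqP v'0 fE.
  have tt' : t = t'.
    by apply: val_inj; have := congr1 (syndrome^~ b) fE; rewrite !syn_f v0 v'0 !Nat.lxor_0_l.
  subst t'; move/(congr1 (fun w : cube n => flip w (Ordinal (off_lt t)))): fE.
  by rewrite /f /= !flipK => ->.
rewrite -(card_ord (2 ^ r)) -cardsT -cardsX -(card_in_imset fI).
by rewrite -(card_cube n) max_card.
Qed.

End Syndrome.

Definition upper (M b : nat) := M <= b.

Lemma half_mod_inj M b b' : b < M + M -> b' < M + M ->
  upper M b = upper M b' -> b %% M = b' %% M -> b = b'.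
Proof.
rewrite /upper => b_lt b'_lt; case: (leqP M b) => [Mb | bM] /esym.
- by move=> Mb'; rewrite -(subnKC Mb) -(subnKC Mb') !modnDl !modn_small; lia.
- by move=> /negbT; rewrite -ltnNge => b'M; rewrite !modn_small.
Qed.

Section Construction.
Variables (n M r : nat).
Implicit Types (v : cube n) (d : 'I_n) (tau : bool).
Local Notation s := ((M + M) * 2 ^ r).
Local Notation syn := (syndrome r).

Definition nonzero_half tau v :=
  [forall b : 'I_(M + M), (upper M b == tau) ==> (syn v b != 0)].

Definition hub tau v :=
  [exists b : 'I_(M + M), (upper M b == tau) && (syn v b == 0)] && nonzero_half (~~ tau) v.

Definition parity_above v d := odd #|[set c : 'I_n | (s <= c) && (c != d) && v c]|.

(* The first [s] coordinates form [2 M] blocks of length [2 ^ r], split into two halves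
   of [M] blocks.  An edge in direction [d] inside block [b] with offset [t != 0] joins
   syndromes [0] and [t] in that block, and needs every block of the other half to have a
   nonzero syndrome. *)
Definition tedge v d :=
  if d < s then
    [&& d %% 2 ^ r != 0,
        (syn v (d %/ 2 ^ r) == 0) || (syn v (d %/ 2 ^ r) == d %% 2 ^ r)
      & nonzero_half (~~ upper M (d %/ 2 ^ r)) v]
  else [exists tau, hub tau v && (parity_above v d == tau)].

Definition Tgraph : {set {set cube n}} :=
  [set [set vd.1; flip vd.1 vd.2] | vd in [set vd : cube n * 'I_n | tedge vd.1 vd.2]].

Lemma syndrome_flip_big v d (b : 'I_(M + M)) : s <= d -> syn (flip v d) b = syn v b.
Proof.
move=> sd; apply: syndrome_flip_other; apply: contraTneq sd => db.
by rewrite -ltnNge -ltn_divLR ?expn_gt0 // db.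
Qed.

Lemma nonzero_half_flip_big tau v d : s <= d -> nonzero_half tau (flip v d) = nonzero_half tau v.
Proof. by move=> sd; apply: eq_forallb => b; rewrite syndrome_flip_big. Qed.

Lemma hub_flip_big tau v d : s <= d -> hub tau (flip v d) = hub tau v.
Proof.
move=> sd; rewrite /hub nonzero_half_flip_big //; congr (_ && _).
by apply: eq_existsb => b; rewrite syndrome_flip_big.
Qed.

Lemma hub_uniq tau tau' v : hub tau v -> hub tau' v -> tau = tau'.
Proof.
case: tau'; case: tau => // /andP [/existsP [b /andP [/eqP bt /eqP b0]] _] /andP [_ /forallP nz];
  by have := nz b; rewrite bt b0.
Qed.

Lemma parity_above_flip v d : parity_above (flip v d) d = parity_above v d.
Proof.
congr (odd _); apply: eq_card => c; rewrite !inE flipE.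
by case: eqP => _; rewrite ?andbF.
Qed.

Lemma parity_above_flip_other v d d' : s <= d' -> d' != d ->
  parity_above (flip v d') d = ~~ parity_above v d.
Proof.
move=> sd' d'd; rewrite /parity_above (cardsD1 d') [in RHS](cardsD1 d') !inE flipE eqxx sd' d'd.
set A := _ :\ d'; set B := _ :\ d'.
have -> : A = B by apply/setP => c; rewrite !inE flipE; case: eqP.
by case: (v d'); rewrite /= ?oddS ?negbK.
Qed.

Lemma tedge_flip v d : tedge (flip v d) d = tedge v d.
Proof.
rewrite /tedge; case: ifP => ds.
  rewrite syndrome_flip eqxx lxor_eq0 orbC; congr [&& _, _ || _ & _].
  - apply/eqP/eqP => [E | ->]; last exact: Nat.lxor_0_l.
    by rewrite -(lxorKr (d %% 2 ^ r) (syn v _)) E Nat.lxor_nilpotent.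
  - apply: eq_forallb => b; case: eqP => //= bd.
    by rewrite syndrome_flip_other //; apply/eqP => db; move: bd; rewrite db; case: (upper _ _).
by apply: eq_existsb => tau; rewrite hub_flip_big ?parity_above_flip // leqNgt ds.
Qed.

Lemma Tgraph_tedge v d : [set v; flip v d] \in Tgraph -> tedge v d.
Proof.
case/imsetP => -[w d'] /[!inE] /= wd' E.
have : v \in [set w; flip w d'] /\ flip v d \in [set w; flip w d'] by rewrite -E !set21 set22.
rewrite !inE => -[/orP [] /eqP vE /orP [] /eqP]; subst v.
- by move/eqP; rewrite (negbTE (flip_neq _ _)).
- by move/flip_inj ->.
- by rewrite -{2}(flipK d' w) => /flip_inj ->; rewrite tedge_flip.
- by move/eqP; rewrite (negbTE (flip_neq _ _)).
Qed.

Lemma Tgraph_sub : Tgraph \subset cube_edges n.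
Proof.
apply/subsetP => e /imsetP [[v d] _ ->]; rewrite inE.
by apply/existsP; exists v; apply/existsP; exists (flip v d); rewrite cadj_flip eqxx.
Qed.

End Construction.

Lemma block_lt M r c : c < (M + M) * 2 ^ r -> c %/ 2 ^ r < M + M.
Proof. by rewrite ltn_divLR // expn_gt0. Qed.

(* A copy [subcube p d] of [Q_(M+1)] in [Tgraph]: the edges at [p] and at [flip p (d j)]
   force the small directions (those [< s]) into distinct blocks of a single half and allow
   at most one big direction.  Hence there are [M] small directions covering that half, and
   flipping those whose block has syndrome 0 at [p] reaches a vertex without zero
   syndromes, from which no big edge of [Tgraph] starts. *)
Section NoCopy.
Variables (n M r : nat) (p : cube n) (d : 'I_M.+1 -> 'I_n).
Hypotheses (M_gt0 : 0 < M) (dI : injective d).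
Hypothesis copy_in_T : forall x i, tedge M r (subcube p d x) (d i).
Local Notation s := ((M + M) * 2 ^ r).
Local Notation syn := (syndrome r).
Local Notation blk i := (d i %/ 2 ^ r).
Local Notation off i := (d i %% 2 ^ r).
Local Notation small := [set i | d i < s].

Lemma tedge_at0 i : tedge M r p (d i).
Proof. by have := copy_in_T (cube0 _) i; rewrite subcube0. Qed.

Lemma tedge_at1 i j : tedge M r (flip p (d j)) (d i).
Proof. by have := copy_in_T (flip (cube0 _) j) i; rewrite subcube_flip // subcube0. Qed.

Lemma small_blocks_distinct i j : i != j -> d i < s -> d j < s -> blk i != blk j.
Proof.
move=> ij di dj; apply/eqP => bij.
have offij : off i != off j.
  apply: contra_neq ij => oij; apply/dI/val_inj.
  by rewrite /= (divn_eq (d i) (2 ^ r)) (divn_eq (d j) (2 ^ r)) bij oij.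
have := tedge_at0 i; rewrite /tedge di bij => /and3P [oi0 si _].
have := tedge_at0 j; rewrite /tedge dj => /and3P [oj0 sj _].
have := tedge_at1 i j; rewrite /tedge di syndrome_flip bij eqxx => /and3P [_ sij _].
have s0 : syn p (blk j) = 0.
  case/orP: si => /eqP // si; case/orP: sj => /eqP sj //.
  by move: offij; rewrite -si -sj eqxx.
by move: sij; rewrite s0 Nat.lxor_0_l (negbTE oj0) eq_sym (negbTE offij).
Qed.

Lemma small_same_half i j : d i < s -> d j < s -> upper M (blk i) = upper M (blk j).
Proof.
move=> di dj; case: (eqVneq (upper M (blk i)) (upper M (blk j))) => // hij; exfalso.
have := tedge_at0 i; rewrite /tedge di => /and3P [_ _ /forallP nzi].
have := tedge_at0 j; rewrite /tedge dj => /and3P [_ sj _].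
have := tedge_at1 i j; rewrite /tedge di => /and3P [_ _ /forallP nzij].
pose bj : 'I_(M + M) := Ordinal (block_lt dj).
have bj_half : upper M bj == ~~ upper M (blk i).
  by move: hij; rewrite /=; case: upper; case: upper.
have := nzi bj; rewrite bj_half /= => sj0.
have := nzij bj; rewrite bj_half /= syndrome_flip eqxx.
by move: sj; rewrite (negbTE sj0) /= => /eqP ->; rewrite Nat.lxor_nilpotent.
Qed.

Lemma big_dir_unique i j : s <= d i -> s <= d j -> i = j.
Proof.
move=> di dj; case: (eqVneq i j) => // ij; exfalso.
have := tedge_at0 i; rewrite /tedge ltnNge di => /existsP [tau /andP [hub_tau /eqP par]].
have := tedge_at1 i j; rewrite /tedge ltnNge di => /existsP [tau' /andP [hub_tau' /eqP par']].
rewrite hub_flip_big // in hub_tau'.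
rewrite parity_above_flip_other // in par'; last by apply: contra_neq ij => /dI.
by move: (hub_uniq hub_tau hub_tau'); rewrite -par -par'; case: parity_above.
Qed.

Let blk_mod i : 'I_M := Ordinal (ltn_pmod (blk i) M_gt0).

Lemma blk_mod_inj : {in small &, injective blk_mod}.
Proof.
move=> i j /[!inE] di dj /(congr1 val) /= gij; apply/eqP/negPn/negP => ij.
have := small_blocks_distinct ij di dj.
by rewrite (half_mod_inj (block_lt di) (block_lt dj) (small_same_half di dj) gij) eqxx.
Qed.

Lemma card_small : #|small| = M.
Proof.
have le_small : #|small| <= M.
  by rewrite -(card_in_imset blk_mod_inj); apply: leq_trans (max_card _) _; rewrite card_ord.
have le_big : #|~: small| <= 1.
  by apply/card_le1_eqP => i j /[!inE]; rewrite -!leqNgt => di dj; apply: big_dir_unique.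
by have := cardsC small; rewrite card_ord; lia.
Qed.

Lemma small_cover i0 (b : 'I_(M + M)) : d i0 < s -> upper M b = upper M (blk i0) ->
  exists2 i, d i < s & blk i = b.
Proof.
move=> di0 b_half.
have : Ordinal (ltn_pmod b M_gt0) \in blk_mod @: small.
  suff -> : blk_mod @: small = setT by rewrite inE.
  apply/eqP; rewrite eqEcard subsetT cardsT card_ord (card_in_imset blk_mod_inj).
  by rewrite card_small leqnn.
case/imsetP => i /[!inE] di /(congr1 val) /= gi; exists i => //.
apply: half_mod_inj (block_lt di) (ltn_ord b) _ (esym gi).
by rewrite b_half (small_same_half di di0).
Qed.

Lemma exists_small : exists i0, d i0 < s.
Proof.
have /card_gt0P [i0] : 0 < #|small| by rewrite card_small.
by rewrite inE; exists i0.
Qed.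

Let x0 : cube M.+1 := [ffun i => (d i < s) && (syn p (blk i) == 0)].

Lemma syndrome_x0 (b : 'I_(M + M)) : syn (subcube p d x0) b != 0.
Proof.
have [i0 di0] := exists_small; rewrite syndrome_subcube //.
have := tedge_at0 i0; rewrite /tedge di0 => /and3P [_ _ /forallP nz0].
have [b_half | b_half] := eqVneq (upper M b) (upper M (blk i0)); last first.
  rewrite big_pred0 ?Nat.lxor_0_r.
    by apply: (implyP (nz0 b)); move: b_half; case: (upper M b); case: (upper M _).
  move=> k; rewrite ffunE -andbA; apply/and3P => -[dk _ /eqP bk].
  by move: b_half; rewrite -bk (small_same_half dk di0) eqxx.
have [i di bi] := small_cover di0 b_half.
have sel k : x0 k && (blk k == b) = (k == i) && x0 i.
  case: (eqVneq k i) => [-> | ki]; first by rewrite bi eqxx andbT.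
  apply/negbTE; rewrite ffunE -andbA; apply/and3P => -[dk _ /eqP bk].
  by have := small_blocks_distinct ki dk di; rewrite bk bi eqxx.
have := tedge_at0 i; rewrite /tedge di => /and3P [oi0 _ _].
case xi : (x0 i).
  have sb : syn p b = 0 by move: xi; rewrite ffunE di -bi => /eqP.
  by rewrite (big_pred1 i) ?sb ?Nat.lxor_0_l // => k; rewrite sel xi andbT.
have sb : syn p b != 0 by move: xi; rewrite ffunE di -bi => /negbT.
by rewrite big_pred0 ?Nat.lxor_0_r // => k; rewrite sel xi andbF.
Qed.

Lemma no_copy_in_T : False.
Proof.
have /card_gt0P [j] : 0 < #|~: small|.
  by have := cardsC small; rewrite card_ord card_small; lia.
rewrite !inE -leqNgt => dj.
have := copy_in_T x0 j; rewrite /tedge ltnNge dj /=.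
by case/existsP => tau /andP [/andP [/existsP [b]]]; rewrite (negbTE (syndrome_x0 b)) andbF.
Qed.

End NoCopy.

Lemma copy_cube_hom m n (G : {set {set cube n}}) (phi : cube m -> cube n) :
  G \subset cube_edges n -> injective phi ->
  (forall x y, cadj x y -> [set phi x; phi y] \in G) -> {homo phi : x y / cadj x y}.
Proof.
move=> sub_G phiI phiG x y xy; apply: cube_edges_cadj; first exact: subsetP sub_G _ (phiG _ _ xy).
by rewrite (inj_eq phiI) cadj_neq.
Qed.

Lemma Tgraph_free n M r : ~~ has_copy M.+1 (Tgraph n M r).
Proof.
apply/negP => /existsP [phi /andP [/injectiveP phiI /forallP phiT]].
have phiT' x y : cadj x y -> [set phi x; phi y] \in Tgraph n M r.
  by move=> xy; have := forallP (phiT x) y; rewrite xy.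
have [d dI phiE] := cube_hom_subcube phiI (copy_cube_hom (Tgraph_sub n M r) phiI phiT').
have copy_in_T x i : tedge M r (subcube (phi (cube0 _)) d x) (d i).
  apply: Tgraph_tedge; rewrite -subcube_flip // -!phiE; exact/phiT'/cadj_flip.
case: (posnP M) => [M0 | M_gt0]; last exact: no_copy_in_T M_gt0 dI copy_in_T.
have s0 : (M + M) * 2 ^ r = 0 by rewrite M0.
move: (copy_in_T (cube0 _) ord0); rewrite /tedge s0 ltn0.
case/existsP => _ /andP [/andP [/existsP [b _] _] _].
by case: b; rewrite M0.
Qed.

Definition good n M r (v : cube n) := [forall b : 'I_(M + M), syndrome r v b != 0].

(* The copy of [Q_(M+1)] through the edge [{v, flip v d0}]: besides [d0], its directions
   are, for each block [b] in the half given by the parity of [v], the coordinate of [b] at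
   offset [syndrome r v b], which is nonzero because [v] is good. *)
Section Completion.
Variables (n M r : nat) (v : cube n) (d0 : 'I_n).
Local Notation s := ((M + M) * 2 ^ r).
Local Notation syn := (syndrome r).
Local Notation lft := (lift ord_max).
Hypotheses (s_le_d0 : s <= d0) (v_good : good M r v).

Let tau := parity_above M r v d0.
Let hb (k : 'I_M) : nat := if tau then M + k else k.

Lemma hb_lt k : hb k < M + M.
Proof. by have := ltn_ord k; rewrite /hb; case: tau; lia. Qed.

Lemma upper_hb k : upper M (hb k) = tau.
Proof. by rewrite /upper /hb; case: tau; rewrite ?leq_addr // leqNgt ltn_ord. Qed.

Lemma hb_inj : injective hb.
Proof. by move=> k k'; rewrite /hb => E; apply: ord_inj; move: E; case: tau; lia. Qed.

Lemma syn_v_hb k : syn v (hb k) != 0.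
Proof. exact: (forallP v_good (Ordinal (hb_lt k))). Qed.

Lemma small_dir_lt k : hb k * 2 ^ r + syn v (hb k) < s.
Proof.
apply: (@leq_trans ((hb k).+1 * 2 ^ r)).
  by rewrite mulSn; have := syndrome_lt r v (hb k); lia.
by rewrite leq_mul2r hb_lt orbT.
Qed.

Let sdir k : 'I_n := Ordinal (leq_trans (small_dir_lt k) (leq_trans s_le_d0 (ltnW (ltn_ord d0)))).

Lemma sdir_block k : (sdir k %/ 2 ^ r = hb k) * (sdir k %% 2 ^ r = syn v (hb k)).
Proof. exact: block_divmod (syndrome_lt _ _ _). Qed.

Let dir (i : 'I_M.+1) : 'I_n := if unlift ord_max i is Some k then sdir k else d0.

Lemma dir_max : dir ord_max = d0.
Proof. by rewrite /dir unlift_none. Qed.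

Lemma dir_lift k : dir (lft k) = sdir k.
Proof. by rewrite /dir liftK. Qed.

Lemma d0_block : M + M <= d0 %/ 2 ^ r.
Proof. by rewrite leq_divRL ?expn_gt0. Qed.

Lemma dir_inj : injective dir.
Proof.
have sdir_neq k : sdir k != d0.
  by apply/eqP => /(congr1 val) /= E; have := small_dir_lt k; rewrite E ltnNge s_le_d0.
move=> i j; case: (unliftP ord_max i) => [k -> | ->]; case: (unliftP ord_max j) => [k' -> | ->] //;
  rewrite ?dir_lift ?dir_max.
- by move=> /(congr1 (fun c : 'I_n => c %/ 2 ^ r)); rewrite !sdir_block => /hb_inj ->.
- by move=> E; move: (sdir_neq k); rewrite E eqxx.
- by move=> E; move: (sdir_neq k'); rewrite E eqxx.
Qed.

Local Notation phi := (subcube v dir).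

Lemma syn_phi x b : syn (phi x) b =
  Nat.lxor (syn v b) (\big[Nat.lxor/0]_(i | x i && (dir i %/ 2 ^ r == b)) (dir i %% 2 ^ r)).
Proof. exact: syndrome_subcube dir_inj. Qed.

Lemma syn_phi_half x k : syn (phi x) (hb k) = if x (lft k) then 0 else syn v (hb k).
Proof.
rewrite syn_phi.
have sel i : x i && (dir i %/ 2 ^ r == hb k) = (i == lft k) && x (lft k).
  case: (unliftP ord_max i) => [k' -> | ->].
    rewrite dir_lift sdir_block (inj_eq hb_inj) (inj_eq (@lift_inj _ ord_max)).
    by case: eqP => [-> | _]; rewrite ?andbT ?andbF.
  rewrite dir_max (negbTE (neq_lift _ _)) /=; apply/negbTE.
  by rewrite negb_and neq_ltn (leq_trans (hb_lt k) d0_block) !orbT.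
case: ifP => xk.
  rewrite (big_pred1 (lft k)) ?dir_lift ?sdir_block ?Nat.lxor_nilpotent // => i.
  by rewrite sel xk andbT.
by rewrite big_pred0 ?Nat.lxor_0_r // => i; rewrite sel xk andbF.
Qed.

Lemma syn_phi_other x (b : 'I_(M + M)) : upper M b != tau -> syn (phi x) b = syn v b.
Proof.
move=> b_half; rewrite syn_phi big_pred0 ?Nat.lxor_0_r // => i.
apply/negbTE; rewrite negb_and; apply/orP; right.
case: (unliftP ord_max i) => [k -> | ->].
  by rewrite dir_lift sdir_block; apply: contra_neq b_half => <-; rewrite upper_hb.
by rewrite dir_max neq_ltn (leq_trans (ltn_ord b) d0_block) orbT.
Qed.

Lemma parity_phi x : parity_above M r (phi x) d0 = tau.
Proof.
congr (odd _); apply: eq_card => c; rewrite !inE.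
case: (boolP (s <= c)) => //= sc; case: (eqVneq c d0) => //= cd0.
rewrite ffunE; case: existsP => [[i /andP [_ /eqP ic]] | _]; last by rewrite addbF.
move: ic cd0 sc; case: (unliftP ord_max i) => [k -> | ->]; rewrite ?dir_lift ?dir_max => <-.
  by move=> _; rewrite leqNgt (_ : sdir k < s) //; exact: small_dir_lt.
by rewrite eqxx.
Qed.

Lemma phi_edge x i : [set phi x; flip (phi x) (dir i)] \in [set v; flip v d0] |: Tgraph n M r.
Proof.
apply/setU1P; case: (unliftP ord_max i) => [k -> | ->].
  right; apply/imsetP; exists (phi x, dir (lft k)) => //; rewrite inE /= dir_lift /tedge.
  rewrite (_ : sdir k < s) ?small_dir_lt // !sdir_block syn_v_hb syn_phi_half upper_hb /=.
  apply/andP; split; first by case: ifP; rewrite eqxx ?orbT.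
  apply/forallP => b; apply/implyP => /eqP b_half.
  by rewrite syn_phi_other ?(forallP v_good) // b_half; case: tau.
rewrite dir_max; case: (boolP [exists k, x (lft k)]) => [/existsP [k xk] | none].
  right; apply/imsetP; exists (phi x, d0) => //; rewrite inE /= /tedge ltnNge s_le_d0 /=.
  apply/existsP; exists tau; rewrite parity_phi eqxx andbT; apply/andP; split.
    by apply/existsP; exists (Ordinal (hb_lt k)); rewrite /= upper_hb eqxx syn_phi_half xk.
  apply/forallP => b; apply/implyP => /eqP b_half.
  by rewrite syn_phi_other ?(forallP v_good) // b_half; case: tau.
left; move/existsPn: none => none.
have -> : x = if x ord_max then flip (cube0 _) ord_max else cube0 _.
  apply/ffunP => j; case: (unliftP ord_max j) => [k -> | ->].
    rewrite (negbTE (none k)); case: ifP => _; last by rewrite ffunE.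
    by rewrite flipE eq_sym (negbTE (neq_lift _ _)) ffunE.
  by case: ifP => xm; rewrite ?flipE ?eqxx ffunE ?xm.
case: ifP => _; rewrite ?(subcube_flip _ dir_inj) subcube0 ?dir_max //.
by rewrite flipK setUC.
Qed.

Lemma good_completion : has_copy M.+1 ([set v; flip v d0] |: Tgraph n M r).
Proof.
apply/existsP; exists [ffun x => phi x]; apply/andP; split.
  by apply/injectiveP => x y; rewrite !ffunE; exact: subcube_inj dir_inj x y.
apply/forallP => x; apply/forallP => y; apply/implyP => /cadjP [i ->].
by rewrite !ffunE (subcube_flip _ dir_inj) phi_edge.
Qed.

End Completion.

Lemma has_copyS m n (G G' : {set {set cube n}}) : G \subset G' -> has_copy m G -> has_copy m G'.
Proof.
move=> sGG' /existsP [phi /andP [phiI /forallP phiG]]; apply/existsP; exists phi; rewrite phiI /=.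
apply/forallP => x; apply/forallP => y; apply/implyP => xy.
by apply: (subsetP sGG'); have := forallP (phiG x) y; rewrite xy.
Qed.

(* A largest [Q_m]-free subgraph of [Q_n] containing [F] is saturated. *)
Lemma saturated_sup m n (F : {set {set cube n}}) :
  F \subset cube_edges n -> ~~ has_copy m F -> exists2 G, saturated m G & F \subset G.
Proof.
move=> F_edges F_free.
pose P (G : {set {set cube n}}) := [&& F \subset G, G \subset cube_edges n & ~~ has_copy m G].
have PF : P F by rewrite /P subxx F_edges F_free.
case: (arg_maxnP (fun G : {set {set cube n}} => #|G|) PF) => G /and3P [FG G_edges G_free] G_max.
exists G => //; rewrite /saturated G_edges G_free; apply/forallP => e; apply/implyP.
rewrite in_setD => /andP [eG e_edge]; apply: contraT => e_free.
have := G_max (e |: G); rewrite /P e_free andbT (subset_trans FG (subsetUr _ _)).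
by rewrite subUset sub1set e_edge G_edges cardsU1 eG => /(_ isT); lia.
Qed.

Lemma bigmin_le (I : finType) (P : pred I) (F : I -> nat) x i0 :
  P i0 -> \big[minn/x]_(i | P i) F i <= F i0.
Proof.
rewrite unlock => Pi0; elim: (index_enum I) (mem_index_enum i0) => // i e IH.
rewrite inE /= => /orP [/eqP <- | i0e]; first by rewrite Pi0 geq_minl.
by case: ifP => _; [apply: leq_trans (geq_minr _ _) (IH i0e) | exact: IH].
Qed.

Lemma sat_le m n (G : {set {set cube n}}) : saturated m G -> sat n m <= #|G|.
Proof. exact: bigmin_le. Qed.

Lemma card_bigcup_le (I T : finType) (F : I -> {set T}) :
  #|\bigcup_i F i| <= \sum_i #|F i|.
Proof.
elim/big_rec2: _ => [|i U k _ IH]; first by rewrite cards0.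
by apply: leq_trans (leq_card_setU _ _) _; rewrite leq_add2l.
Qed.

Lemma card_ord_lt n s : #|[set c : 'I_n | c < s]| <= s.
Proof.
case: n => [|n]; first by rewrite (leq_trans (max_card _)) // card_ord.
have sub : [set c : 'I_n.+1 | c < s] \subset [set inord c | c : 'I_s].
  apply/subsetP => c; rewrite inE => cs.
  by apply/imsetP; exists (Ordinal cs); rewrite ?inordK ?inord_val.
by apply: leq_trans (subset_leq_card sub) _; rewrite (leq_trans (leq_imset_card _ _)) // card_ord.
Qed.

Section Counting.
Variables (n M r : nat).
Local Notation s := ((M + M) * 2 ^ r).
Hypothesis s_le_n : s <= n.

Lemma card_not_good : #|[set v : cube n | ~~ good M r v]| * 2 ^ r <= (M + M) * 2 ^ n.
Proof.
pose Z (b : 'I_(M + M)) := [set v : cube n | syndrome r v b == 0].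
have sub : [set v | ~~ good M r v] \subset \bigcup_b Z b.
  apply/subsetP => v; rewrite inE negb_forall => /existsP [b]; rewrite negbK => vb.
  by apply/bigcupP; exists b; rewrite ?inE.
apply: leq_trans (leq_mul (leq_trans (subset_leq_card sub) (card_bigcup_le _)) (leqnn _)) _.
rewrite big_distrl /= -[X in _ <= X * _](card_ord (M + M)) -sum_nat_const.
apply: leq_sum => b _; apply: card_syndrome0; apply: leq_trans s_le_n.
by rewrite leq_mul2r ltn_ord orbT.
Qed.

Lemma saturated_edge G e : saturated M.+1 G -> Tgraph n M r \subset G -> e \in G ->
  exists2 vd : cube n * 'I_n, (vd.2 < s) || ~~ good M r vd.1 & e = [set vd.1; flip vd.1 vd.2].
Proof.
move=> /and3P [G_edges G_free _] TG eG.
have := subsetP G_edges _ eG; rewrite inE.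
case/existsP => u /existsP [w /andP [/cadjP [d ->] /eqP eE]]; subst e.
exists (u, d) => //=; rewrite orbC -implybE; apply/implyP => u_good.
rewrite ltnNge; apply: contra G_free => sd.
apply: has_copyS (good_completion sd u_good).
by rewrite subUset sub1set eG TG.
Qed.

Lemma sat_bound : sat n M.+1 * 2 ^ r <= 2 ^ n * (s * 2 ^ r + (M + M) * n).
Proof.
have [G G_sat TG] := saturated_sup (Tgraph_sub n M r) (Tgraph_free n M r).
pose S := [set vd : cube n * 'I_n | (vd.2 < s) || ~~ good M r vd.1].
have G_sub : G \subset [set [set vd.1; flip vd.1 vd.2] | vd in S].
  apply/subsetP => e eG; have [vd vdS ->] := saturated_edge G_sat TG eG.
  by apply/imsetP; exists vd; rewrite ?inE.
have card_S : #|S| <= 2 ^ n * s + #|[set v : cube n | ~~ good M r v]| * n.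
  rewrite (_ : S = setX setT [set c : 'I_n | c < s] :|: setX [set v | ~~ good M r v] setT).
    apply: leq_trans (leq_card_setU _ _) _; rewrite !cardsX !cardsT card_cube card_ord.
    by rewrite leq_add2r leq_mul2l card_ord_lt orbT.
  by apply/setP => -[v c]; rewrite !inE andbT.
have card_G : #|G| <= #|S|.
  exact: leq_trans (subset_leq_card G_sub) (leq_imset_card _ _).
have := leq_mul (leq_trans (sat_le G_sat) (leq_trans card_G card_S)) (leqnn (2 ^ r)).
move/leq_trans; apply; have := card_not_good; nia.
Qed.

End Counting.

Open Scope R_scope.

Lemma INR_div_ge0 a b : 0 <= INR a / INR b.
Proof.
case: b => [|b]; first by rewrite /Rdiv (_ : INR 0 = 0) // Rinv_0 Rmult_0_r; lra.
by apply: Rmult_le_pos; [exact: pos_INR | apply/Rlt_le/Rinv_0_lt_compat/lt_0_INR; lia].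
Qed.

Lemma mul_lt_half a q eps : 0 <= a -> 0 < eps -> q < eps / (2 * (a + 1)) -> a * q < eps / 2.
Proof.
move=> a_ge0 eps_gt0 q_lt.
have e_def : eps / (2 * (a + 1)) * (2 * (a + 1)) = eps by field; lra.
move: q_lt e_def; move: (eps / _) => e q_lt e_def; nra.
Qed.

Lemma Un_cv0_of_bound (u A : nat -> R) (B : R) : (forall n, 0 <= u n) ->
  (forall r, exists N, forall n, (N <= n)%coq_nat -> u n <= A r / INR n + B * (/ 2) ^ r) ->
  Un_cv u 0.
Proof.
move=> u_ge0 u_le eps eps_gt0.
have [r small_r] : exists r, Rabs ((/ 2) ^ r) < eps / (2 * (Rabs B + 1)).
  have [r Hr] := pow_lt_1_zero (/ 2) ltac:(rewrite Rabs_pos_eq; lra) (eps / (2 * (Rabs B + 1)))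
    ltac:(apply: Rdiv_lt_0_compat; [lra | have := Rabs_pos B; lra]).
  by exists r; apply: Hr.
have [N1 u_le_r] := u_le r.
have [N2 [invN2 N2_gt0]] := archimed_cor1 (eps / (2 * (Rabs (A r) + 1)))
  ltac:(apply: Rdiv_lt_0_compat; [lra | have := Rabs_pos (A r); lra]).
exists (Nat.max N1 N2) => n n_ge; rewrite /R_dist Rminus_0_r Rabs_pos_eq //.
apply: Rle_lt_trans (u_le_r n ltac:(lia)) _.
have N2_pos : 0 < INR N2 by apply: lt_0_INR.
have inv_n : / INR n <= / INR N2 by apply: Rinv_le_contravar => //; apply: le_INR; lia.
have A_term : A r / INR n < eps / 2.
  apply: Rle_lt_trans (Rle_abs _) _.
  rewrite Rabs_mult Rabs_inv (Rabs_pos_eq (INR n)); last exact: pos_INR.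
  apply: mul_lt_half (Rabs_pos _) eps_gt0 _; exact: Rle_lt_trans inv_n invN2.
have B_term : B * (/ 2) ^ r < eps / 2.
  apply: Rle_lt_trans (Rle_abs _) _; rewrite Rabs_mult.
  exact: mul_lt_half (Rabs_pos _) eps_gt0 small_r.
lra.
Qed.

Lemma INR_muln a b : INR (a * b)%N = INR a * INR b.
Proof. by rewrite mulnE mult_INR. Qed.

Lemma INR_addn a b : INR (a + b)%N = INR a + INR b.
Proof. by rewrite addnE plus_INR. Qed.

Lemma INR_exp2n a : INR (2 ^ a)%N = 2 ^ a.
Proof. by rewrite expn2E pow_INR. Qed.

Lemma sat_ratio_bound n M r : ((M + M) * 2 ^ r <= n)%N -> (0 < n)%N ->
  INR (sat n M.+1) / INR (eQ n) <=
  2 * INR ((M + M) * 2 ^ r) / INR n + 2 * INR (M + M) * (/ 2) ^ r.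
Proof.
case: n => // n s_le_n _; have := sat_bound s_le_n.
rewrite /eQ succnK; set K := (M + M)%N; move/leP/le_INR.
rewrite !INR_muln INR_addn !INR_muln !INR_exp2n pow_inv.
change (2 ^ n.+1) with (2 * 2 ^ n).
have P_gt0 : 0 < 2 ^ n by apply: pow_lt; lra.
have R_gt0 : 0 < 2 ^ r by apply: pow_lt; lra.
have N_gt0 : 0 < INR n.+1 by apply: lt_0_INR; lia.
move: (INR (sat _ _)) (INR K) (2 ^ n) (2 ^ r) (INR n.+1) P_gt0 R_gt0 N_gt0 (pos_INR K).
move=> X K' P R N P_gt0 R_gt0 N_gt0 K_ge0 sat_le.
have gap : 2 * (K' * R) / N + 2 * K' * / R - X / (N * P) =
           (2 * P * (K' * R * R + K' * N) - X * R) / (N * P * R) by field; lra.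
suff : 0 <= (2 * P * (K' * R * R + K' * N) - X * R) / (N * P * R) by lra.
apply: Rmult_le_pos; first lra.
by apply/Rlt_le/Rinv_0_lt_compat/Rmult_lt_0_compat; first exact: Rmult_lt_0_compat.
Qed.

Theorem theorem1 (m : nat) (hm : (1 <= m)%coq_nat) :
  Un_cv (fun n : nat => INR (sat n m) / INR (eQ n)) 0.
Proof.
have [M ->] : exists M, m = M.+1 by exists m.-1; lia.
apply: (@Un_cv0_of_bound _ (fun r => 2 * INR ((M + M) * 2 ^ r)) (2 * INR (M + M))).
  by move=> n; exact: INR_div_ge0.
move=> r; exists (maxn ((M + M) * 2 ^ r) 1) => n /leP; rewrite geq_max => /andP [s_le_n n_gt0].
exact: sat_ratio_bound.
Qed.
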